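(* Let $0<\rho_{\max}$ and $0<w_{\min}\le w_{\max}$, and let $V:[0,\rho_{\max})\times[w_{\min},w_{\max}]\to\mathbb{R}$, $(\rho,w)\mapsto V(\rho,w)$, be a $C^2$ function such that the generalized flow rate $Q(\rho,w)=\rho\,V(\rho,w)$ satisfies $\frac{\partial^2 Q}{\partial\rho^2}(\rho,w)<0$ for all $(\rho,w)$ in the domain. Define the characteristic velocities $$\lambda^{(1)}(\rho,w)=V(\rho,w)+\rho\,\frac{\partial V}{\partial\rho}(\rho,w),\qquad \lambda^{(2)}(\rho,w)=V(\rho,w).$$ Then for all $(\rho,w)$ in the domain, $\frac{\partial\lambda^{(1)}}{\partial\rho}(\rho,w)<0$ and $\frac{\partial\lambda^{(2)}}{\partial\rho}(\rho,w)<0$, where the partial derivatives in $\rho$ are taken with $w$ held fixed.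
   Context: This concerns the generalized Aw-Rascle-Zhang (GARZ) traffic model $\rho_t+(\rho u)_x=0$, $w_t+u w_x=0$ with $u=V(\rho,w)$, where $\rho$ is the vehicle density, $w$ the empty road velocity and $V$ the generalized velocity function. Written in conservative variables $(\rho,q)$ with $q=\rho w$, the flux is $(u\rho,uq)$, and the eigenvalues of its Jacobian are $\lambda^{(1)}=u+\rho\,\partial V/\partial\rho$ and $\lambda^{(2)}=u$, with $\partial V/\partial\rho$ computed at fixed $w$. *)

From Stdlib Require Import Reals.
From Coquelicot Require Import Coquelicot.
Open Scope R_scope.

Definition d_rho (f : R -> R -> R) : R -> R -> R :=
  fun x y => Derive (fun t => f t y) x.
Definition d_w (f : R -> R -> R) : R -> R -> R :=
  fun x y => Derive (fun t => f x t) y.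

Definition partials_exist (f : R -> R -> R) (x y : R) : Prop :=
  ex_derive (fun t => f t y) x /\ ex_derive (fun t => f x t) y.

Definition C2_on (U : R * R -> Prop) (f : R -> R -> R) : Prop :=
  forall x y, U (x, y) ->
    partials_exist f x y /\
    partials_exist (d_rho f) x y /\ partials_exist (d_w f) x y /\
    continuity_2d_pt f x y /\
    continuity_2d_pt (d_rho f) x y /\ continuity_2d_pt (d_w f) x y /\
    continuity_2d_pt (d_rho (d_rho f)) x y /\
    continuity_2d_pt (d_w (d_rho f)) x y /\
    continuity_2d_pt (d_rho (d_w f)) x y /\
    continuity_2d_pt (d_w (d_w f)) x y.

Definition dom (rho_max w_min w_max : R) (p : R * R) : Prop :=
  0 <= fst p < rho_max /\ w_min <= snd p <= w_max.

Definition Qflow (V : R -> R -> R) : R -> R -> R := fun r w => r * V r w.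

Definition lambda1 (V : R -> R -> R) : R -> R -> R :=
  fun r w => V r w + r * d_rho V r w.
Definition lambda2 (V : R -> R -> R) : R -> R -> R := fun r w => V r w.

From Stdlib Require Import Reals Lra.
From Coquelicot Require Import Coquelicot.
Open Scope R_scope.

(* Since dQ/drho = lambda1, the first claim is just the concavity hypothesis.
   For the second, the weighted function s |-> s^2 dV/drho (s, w) vanishes at
   s = 0 and has derivative s * d^2Q/drho^2 (s, w) < 0 for s > 0, so it is
   negative at rho > 0; at rho = 0 the hypothesis reads 2 dV/drho < 0. *)

Lemma Derive_id_mul (f : R -> R) (x : R) :
  ex_derive f x -> Derive (fun t => t * f t) x = f x + x * Derive f x.
Proof.
  intros Hf.
  rewrite (Derive_mult (fun t => t) f) by (auto; apply ex_derive_id).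
  rewrite Derive_id. ring.
Qed.

Lemma Rlt0_of_weighted_derive (g : R -> R) (r : R) :
  0 <= r ->
  (forall s, 0 <= s <= r -> ex_derive g s /\ 2 * g s + s * Derive g s < 0) ->
  g r < 0.
Proof.
  intros Hr Hg.
  destruct Hr as [Hr | <-].
  2: { destruct (Hg 0) as [_ H0]; lra. }
  set (h := fun s => s * s * g s).
  set (h' := fun s => s * (2 * g s + s * Derive g s)).
  destruct (MVT_cor2 h h' 0 r Hr) as [c [Hhc Hc]].
  { intros s Hs. apply is_derive_Reals.
    destruct (Hg s Hs) as [Hds _].
    unfold h, h'. auto_derive; [exact Hds |].
    set (d := Derive g s). ring. }
  assert (Hh'c : h' c < 0).
  { destruct (Hg c) as [_ Hneg]; [lra |]. unfold h'. nra. }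
  unfold h in Hhc. nra.
Qed.

Lemma locally_slice (U : R * R -> Prop) (r w : R) :
  open U -> U (r, w) -> locally r (fun s => U (s, w)).
Proof.
  intros HU Hrw. destruct (HU _ Hrw) as [eps Heps].
  exists eps. intros s Hs. apply Heps.
  split; [exact Hs | apply ball_center].
Qed.

Lemma d_rho_Qflow (V : R -> R -> R) (r w : R) :
  ex_derive (fun t => V t w) r -> d_rho (Qflow V) r w = lambda1 V r w.
Proof. intros HV. apply Derive_id_mul, HV. Qed.

Lemma d_rho_lambda1 (V : R -> R -> R) (r w : R) :
  ex_derive (fun t => V t w) r -> ex_derive (fun t => d_rho V t w) r ->
  d_rho (lambda1 V) r w = 2 * d_rho V r w + r * d_rho (d_rho V) r w.
Proof.
  intros HV HdV. unfold lambda1, d_rho at 1.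
  rewrite Derive_plus by (auto; apply ex_derive_mult; auto; apply ex_derive_id).
  rewrite (Derive_id_mul (fun t => d_rho V t w)) by exact HdV.
  unfold d_rho. ring.
Qed.

(* Pointwise existence of [d_rho V] on the open set [U] is what lets the
   identity [d_rho (Qflow V) = lambda1 V] be differentiated once more. *)
Lemma d_rho_lambda1_Qflow (U : R * R -> Prop) (V : R -> R -> R) (r w : R) :
  open U -> C2_on U V -> U (r, w) ->
  d_rho (lambda1 V) r w = d_rho (d_rho (Qflow V)) r w.
Proof.
  intros HU HV Hrw. symmetry. apply Derive_ext_loc.
  apply (filter_imp (fun s => U (s, w))); [| exact (locally_slice U r w HU Hrw)].
  intros s Hs. destruct (HV s w Hs) as [[HVs _] _].
  apply d_rho_Qflow, HVs.
Qed.

Theorem lemma2 (rho_max w_min w_max : R) (V : R -> R -> R)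
  (U : R * R -> Prop) :
  0 < rho_max -> 0 < w_min -> w_min <= w_max ->
  open U ->
  (forall p, dom rho_max w_min w_max p -> U p) ->
  C2_on U V ->
  (forall r w, dom rho_max w_min w_max (r, w) ->
     d_rho (d_rho (Qflow V)) r w < 0) ->
  forall r w, dom rho_max w_min w_max (r, w) ->
    d_rho (lambda1 V) r w < 0 /\ d_rho (lambda2 V) r w < 0.
Proof.
  intros _ _ _ HU Hdom HV Hconc r w Hrw.
  assert (Hlambda1 : forall s, dom rho_max w_min w_max (s, w) ->
            d_rho (lambda1 V) s w < 0).
  { intros s Hs. rewrite (d_rho_lambda1_Qflow U) by auto. auto. }
  split; [now apply Hlambda1 |].
  change (d_rho V r w < 0).
  destruct Hrw as [[Hr0 Hr] Hw]; simpl in Hr0, Hr, Hw.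
  apply (Rlt0_of_weighted_derive (fun s => d_rho V s w)); [exact Hr0 |].
  intros s Hs.
  assert (Hsw : dom rho_max w_min w_max (s, w)) by (split; simpl; lra).
  destruct (HV s w (Hdom _ Hsw)) as [[HVs _] [[HdVs _] _]].
  split; [exact HdVs |].
  change (2 * d_rho V s w + s * d_rho (d_rho V) s w < 0).
  rewrite <- (d_rho_lambda1 V s w) by auto.
  now apply Hlambda1.
Qed.
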